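(* Let $1\le d<N$, let $w\in I_{d,N}$ with $w\ne(1,\dots,d)$, and let $T\subseteq GL_N$ be the maximal torus of diagonal matrices, so that $(w,d,N,T)$ is a stable Levi–Schubert quadruple. Let $(\overline w,\overline d,\overline N,\overline T)$ be its reduction. Then $(w,d,N,T)$ is spherical (i.e. $X(w)$ has a dense open $T$-orbit) if and only if $\overline w=(\overline N)$ (with $\overline d=1$) or $\overline d\ge2$ and $\overline w=(2,3,\dots,\overline d,\overline N)$.
   Context: Work over $\mathbb{C}$. $G_{d,N}$ is the Grassmannian of $d$-planes in $\mathbb{C}^N$; $B\subset GL_N$ upper triangular, $T\subset B$ the diagonal matrices. $I_{d,N}$ is the set of sequences $(i_1<\dots<i_d)$ in $\{1,\dots,N\}$. For $w=(\ell_1,\dots,\ell_d)\in I_{d,N}$, $X(w)$ is the closure of $B\cdot[e_{\ell_1}\wedge\dots\wedge e_{\ell_d}]$. A Levi–Schubert quadruple $(w,d,N,L)$ with $L$ a standard (block diagonal) Levi subgroup of $GL_N$ is stable if $X(w)$ is $L$-stable under left multiplication, and then spherical if $X(w)$ has a dense open orbit of a Borel subgroup of $L$; $T$ is the Levi with all blocks of size $1$. Reduction: let $p\ge0$ be maximal with $\ell_i=i$ for $i\le p$; then $\overline w=(\ell_{p+1}-p,\dots,\ell_d-p)$, $\overline d=d-p$, $\overline N=\ell_d-p$, and $\overline T$ is the diagonal torus of $GL_{\overline N}$ (image of $T$ under taking the principal submatrix on rows and columns $p+1,\dots,\ell_d$). *)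

From HB Require Import structures.
From mathcomp Require Import all_boot all_order all_algebra.
Set Implicit Arguments. Unset Strict Implicit. Unset Printing Implicit Defensive.
Import Order.TTheory GRing.Theory Num.Theory.
Local Open Scope ring_scope.

Inductive pexpr (V F : Type) : Type :=
| PConst of F
| PVar of V
| PAdd of pexpr V F & pexpr V F
| PMul of pexpr V F & pexpr V F.

Fixpoint peval (R : pzRingType) (V : Type) (x : V -> R) (p : pexpr V R) : R :=
  match p with
  | PConst c => c
  | PVar v => x v
  | PAdd p q => peval x p + peval x q
  | PMul p q => peval x p * peval x q
  end.

(* ---------- The Grassmannian G_{d,N} ----------
   A point of G_{d,N} (a d-plane V in F^N) is represented by a d x N matrix
   of rank d whose rows form a basis of V; two matrices represent the same
   point iff they have the same row space. *)
Definition gr_pt (F : fieldType) (d N : nat) (A : 'M[F]_(d, N)) : Prop :=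
  row_free A.

Definition same_pt (F : fieldType) (d N : nat) (A B : 'M[F]_(d, N)) : Prop :=
  (A == B)%MS.

Definition pluecker (F : fieldType) (d N : nat) (A : 'M[F]_(d, N))
  (f : {ffun 'I_d -> 'I_N}) : F := \det (colsub f A).

(* Zariski topology on G_{d,N} induced by the Pluecker embedding into
   projective space: a point lies in the zero locus of a family S of
   polynomials in the Pluecker coordinates iff they vanish at every
   representative (i.e. at every nonzero multiple of its Pluecker vector). *)
Definition vanish (F : fieldType) (d N : nat)
  (S : pexpr {ffun 'I_d -> 'I_N} F -> Prop) (A : 'M[F]_(d, N)) : Prop :=
  forall p, S p -> forall B : 'M[F]_(d, N), gr_pt B -> same_pt B A ->
    peval (pluecker B) p = 0.

Definition gr_closed (F : fieldType) (d N : nat) (Z : 'M[F]_(d, N) -> Prop)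
  : Prop :=
  exists S : pexpr {ffun 'I_d -> 'I_N} F -> Prop,
    forall A, gr_pt A -> (Z A <-> vanish S A).

Definition gr_closure (F : fieldType) (d N : nat) (Y : 'M[F]_(d, N) -> Prop)
  (A : 'M[F]_(d, N)) : Prop :=
  gr_pt A /\
  forall Z : 'M[F]_(d, N) -> Prop, gr_closed Z ->
    (forall B, gr_pt B -> Y B -> Z B) -> Z A.

Definition rel_open (F : fieldType) (d N : nat) (X O : 'M[F]_(d, N) -> Prop)
  : Prop :=
  exists Z, gr_closed Z /\ forall A, gr_pt A -> (O A <-> (X A /\ ~ Z A)).

Definition rel_dense (F : fieldType) (d N : nat) (X O : 'M[F]_(d, N) -> Prop)
  : Prop :=
  forall A, X A -> gr_closure O A.

(* ---------- Groups acting (g . V has basis rows  v_i^T g^T) ---------- *)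
Definition upper_tri (F : fieldType) (N : nat) (b : 'M[F]_N) : Prop :=
  forall i j : 'I_N, (j < i)%N -> b i j = 0.

Definition borel_orbit (F : fieldType) (d N : nat) (A : 'M[F]_(d, N))
  (B : 'M[F]_(d, N)) : Prop :=
  gr_pt B /\ exists b : 'M[F]_N,
    upper_tri b /\ b \in unitmx /\ same_pt B (A *m b^T).

Definition torus_orbit (F : fieldType) (d N : nat) (A : 'M[F]_(d, N))
  (B : 'M[F]_(d, N)) : Prop :=
  gr_pt B /\ exists t : 'rV[F]_N,
    (forall i, t 0 i != 0) /\ same_pt B (A *m diag_mx t).

(* w = (l_1 < ... < l_d), entries in {1..N} (1-indexed as in the paper). *)
Definition in_IdN (d N : nat) (w : seq nat) : Prop :=
  size w = d /\ sorted ltn w /\ all (fun l => (0 < l <= N)%N) w.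

Definition schubert_pt (F : fieldType) (d N : nat) (w : seq nat)
  : 'M[F]_(d, N) :=
  \matrix_(j < d, k < N) (((k : nat).+1 == nth 0%N w j)%:R).

Definition schubert (F : fieldType) (d N : nat) (w : seq nat)
  : 'M[F]_(d, N) -> Prop :=
  gr_closure (borel_orbit (@schubert_pt F d N w)).

Definition T_spherical (F : fieldType) (d N : nat) (w : seq nat) : Prop :=
  exists A : 'M[F]_(d, N), @schubert F d N w A /\
    rel_open (@schubert F d N w) (torus_orbit A) /\
    rel_dense (@schubert F d N w) (torus_orbit A).

Definition red_p (w : seq nat) : nat :=
  find (fun i => nth 0%N w i != i.+1) (iota 0 (size w)).
Definition wbar (w : seq nat) : seq nat :=
  map (fun l => (l - red_p w)%N) (drop (red_p w) w).
Definition dbar (w : seq nat) : nat := (size w - red_p w)%N.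
Definition Nbar (w : seq nat) : nat := (last 0%N w - red_p w)%N.

(* A Pluecker coordinate p_f vanishes on the
   Borel orbit, hence on X(w), as soon as some k has at most k indices m with
   f m < l_k, while the pivot minor never vanishes there; so each point of the
   Borel orbit has an echelon representative, with identity pivot columns,
   whose other entries are Pluecker ratios.
   If w = (1, ..., p, p + 2, ..., d, L) with L > d, the only other entries of
   this representative that can be nonzero lie in column p + 1 (rows p + 1 to
   d) and in row d (columns d + 1 to L - 1).  These positions form a forest, so
   the torus acts transitively on the representatives whose free entries are
   all nonzero.  This orbit is open in X(w), being cut out by the
   corresponding Pluecker coordinates, and dense, because in characteristic 0
   a polynomial in the free entries vanishing whenever they are all nonzero
   vanishes identically.
   Otherwise rows i = d - 1 and j = d have two non-pivot columns a <> b left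
   of the pivot of row i.  The torus scales p_{i<-a} p_{j<-b} and
   p_{i<-b} p_{j<-a} by the same character, so a dense orbit would force a
   fixed linear relation between them on X(w); but X(w) contains points where
   they take the values (1, 0) and (0, 1). *)

From mathcomp Require Import all_boot all_algebra perm.
From mathcomp Require Import zify ring.
From Stdlib Require Import Classical Lia.
Set Implicit Arguments. Unset Strict Implicit. Unset Printing Implicit Defensive.
Import GRing.Theory.
Local Open Scope ring_scope.

(** * Pluecker coordinates *)

Section Grassmannian.
Variable F : fieldType.
Implicit Types (m n : nat).

Lemma same_pt_refl m n (A : 'M[F]_(m, n)) : same_pt A A.
Proof. exact/eqmxP. Qed.

Lemma same_pt_sym m n (A B : 'M[F]_(m, n)) : same_pt A B -> same_pt B A.
Proof. by move/eqmxP=> eqAB; apply/eqmxP; apply: eqmx_sym. Qed.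

Lemma same_pt_trans m n (A B C : 'M[F]_(m, n)) :
  same_pt A B -> same_pt B C -> same_pt A C.
Proof. by move/eqmxP=> eqAB /eqmxP eqBC; apply/eqmxP; apply: eqmx_trans eqAB eqBC. Qed.

Lemma same_pt_mulmxl m n (M : 'M[F]_m) (A : 'M[F]_(m, n)) :
  M \in unitmx -> same_pt (M *m A) A.
Proof. by move=> uM; apply/eqmxP; apply: eqmxMfull; rewrite row_full_unit. Qed.

Lemma same_pt_mulmxr m n (A B : 'M[F]_(m, n)) (M : 'M[F]_n) :
  same_pt A B -> same_pt (A *m M) (B *m M).
Proof. by case/andP=> sAB sBA; apply/andP; split; apply: submxMr. Qed.

Lemma same_pt_factor m n (A B : 'M[F]_(m, n)) : same_pt B A -> B = (B *m pinvmx A) *m A.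
Proof. by case/andP=> sBA _; rewrite mulmxKpV. Qed.

Lemma unitmx_diag n (t : 'rV[F]_n) : (diag_mx t \in unitmx) = [forall i, t 0 i != 0].
Proof.
rewrite unitmxE det_diag unitfE prodf_seq_neq0.
apply/allP/forallP=> [nz i|nz i _]; last exact: nz.
exact: nz (mem_index_enum i).
Qed.

Lemma pluecker_mulmx m n (M : 'M[F]_m) (A : 'M[F]_(m, n)) f :
  pluecker (M *m A) f = \det M * pluecker A f.
Proof. by rewrite /pluecker -mulmx_colsub det_mulmx. Qed.

Lemma pluecker_diag m n (A : 'M[F]_(m, n)) (t : 'rV[F]_n) f :
  pluecker (A *m diag_mx t) f = pluecker A f * \prod_i t 0 (f i).
Proof.
rewrite /pluecker.
have -> : colsub f (A *m diag_mx t) = colsub f A *m diag_mx (\row_i t 0 (f i)).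
  by apply/matrixP=> i j; rewrite !mul_mx_diag !mxE.
by rewrite det_mulmx det_diag; under [X in _ * X]eq_bigr do rewrite mxE.
Qed.

Lemma row_free_pluecker m n (A : 'M[F]_(m, n)) f : pluecker A f != 0 -> row_free A.
Proof.
move=> nz; rewrite /row_free eqn_leq rank_leq_row /=.
have uAf : colsub f A \in unitmx by rewrite unitmxE unitfE.
have := mxrankM_maxl A (colsub f 1%:M).
by rewrite mulmx_colsub mulmx1 (mxrank_unit uAf).
Qed.

Lemma unitmx_row_free_mull m n (M : 'M[F]_m) (A : 'M[F]_(m, n)) :
  row_free (M *m A) -> M \in unitmx.
Proof.
move=> free; rewrite -row_free_unit /row_free eqn_leq rank_leq_row /=.
by have := mxrankM_maxl M A; move/eqP: free => ->.
Qed.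

Lemma det_trig_neq0 n (M : 'M[F]_n) : is_trig_mx M -> (forall i, M i i != 0) -> \det M != 0.
Proof. by move=> trM nz; rewrite det_trig // prodf_seq_neq0; apply/allP=> i _; apply: nz. Qed.

Lemma trig_unitmx_diag n (M : 'M[F]_n) : is_trig_mx M -> M \in unitmx -> forall i, M i i != 0.
Proof.
move=> trM uM i; move: uM; rewrite unitmxE unitfE det_trig // prodf_seq_neq0.
by move/allP/(_ i (mem_index_enum _)).
Qed.

Lemma det0_rows_supp n (M : 'M[F]_n) (S : {set 'I_n}) (k : 'I_n) :
  (#|S| <= k)%N -> (forall r : 'I_n, (r <= k)%N -> forall c, c \notin S -> M r c = 0) ->
  \det M = 0.
Proof.
move=> cardS suppM; apply: big1 => s _.
case: (pickP [pred r : 'I_n | (r <= k)%N && (s r \notin S)]) => [r /andP[rk rS]|none].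
  by rewrite (bigD1 r) //= (suppM r rk _ rS) mul0r mulr0.
pose h (i : 'I_k.+1) := s (widen_ord (ltn_ord k) i).
have h_inj : injective h by move=> i j /perm_inj /(congr1 val) ij; apply: val_inj.
have hS : [set h i | i in 'I_k.+1] \subset S.
  apply/subsetP=> _ /imsetP[i _ ->].
  by have := none (widen_ord (ltn_ord k) i); rewrite /= -ltnS ltn_ord /= => /negbFE.
have := leq_trans (subset_leq_card hS) cardS.
by rewrite card_imset // card_ord ltnn.
Qed.

Definition fupd m n (f : {ffun 'I_m -> 'I_n}) (k : 'I_m) (c : 'I_n) : {ffun 'I_m -> 'I_n} :=
  [ffun i => if i == k then c else f i].

Lemma pluecker_cramer m n (B : 'M[F]_(m, n)) (f : {ffun 'I_m -> 'I_n}) k c :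
  colsub f B \in unitmx ->
  (invmx (colsub f B) *m B) k c * pluecker B f = pluecker B (fupd f k c).
Proof.
move=> uBf; rewrite /invmx uBf -scalemxAl mxE /pluecker.
rewrite mulrC mulrA divff ?mul1r -?unitfE -?unitmxE //.
rewrite (expand_det_col _ k) mxE; apply: eq_bigr => i _.
rewrite !mxE ffunE eqxx mulrC; congr (_ * (_ * \det _)).
by apply/matrixP=> a b; rewrite !mxE ffunE eq_sym (negbTE (neq_lift _ _)).
Qed.

Lemma pluecker_fupd_id m n (B : 'M[F]_(m, n)) (f : {ffun 'I_m -> 'I_n}) k c :
  colsub f B = 1%:M -> pluecker B (fupd f k c) = B k c.
Proof.
move=> Bf1; rewrite -pluecker_cramer Bf1 ?unitmx1 //.
by rewrite invmx1 mul1mx /pluecker Bf1 det1 mulr1.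
Qed.

Lemma det_diag_delta n (i0 : 'I_n) (a : F) :
  \det (diag_mx (\row_i if i == i0 then a else 1)) = a.
Proof.
rewrite det_diag (bigD1 i0) //= big1 ?mulr1 => [|i /negbTE ni]; rewrite mxE ?eqxx //.
by rewrite ni.
Qed.

End Grassmannian.

Lemma eq_peval (R : pzRingType) V (x x' : V -> R) q : x =1 x' -> peval x q = peval x' q.
Proof. by move=> eq_x; elim: q => //= [q -> r ->|q -> r ->]. Qed.

Definition pexpr_prod (R : pzRingType) V (l : seq (pexpr V R)) : pexpr V R :=
  foldr (@PMul V R) (PConst V 1) l.

Lemma peval_prod (R : pzRingType) V (x : V -> R) l :
  peval x (pexpr_prod l) = \prod_(q <- l) peval x q.
Proof. by elim: l => [|q l IHl] /=; rewrite ?big_nil ?big_cons ?IHl. Qed.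

Lemma card_ord_ltn n j : (j <= n)%N -> #|[set m : 'I_n | (m < j)%N]| = j.
Proof.
move=> jn; have -> : [set m : 'I_n | (m < j)%N] = widen_ord jn @: 'I_j.
  apply/setP=> m; rewrite inE; apply/idP/imsetP => [mj|[i _ ->]]; last by rewrite /= ltn_ord.
  by exists (Ordinal mj) => //; apply: val_inj.
by rewrite card_imset ?card_ord // => a b /(congr1 val) ab; apply: val_inj.
Qed.

Lemma card_ord_ltnD1 n j (k : 'I_n) :
  (j <= n)%N -> (k < j)%N -> #|[set m : 'I_n | (m < j)%N] :\ k| = j.-1.
Proof.
move=> jn kj; apply: succn_inj; rewrite prednK ?(leq_ltn_trans (leq0n k) kj) //.
by rewrite -[RHS](card_ord_ltn jn) (cardsD1 k [set m : 'I_n | (m < j)%N]) inE kj.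
Qed.

(** * Polynomial functions *)

Section PolynomialFunctions.
Variable F : fieldType.

Definition is_polyfun (phi : F -> F) := exists Q : {poly F}, forall z, phi z = Q.[z].

Lemma is_polyfun_ext phi psi : phi =1 psi -> is_polyfun psi -> is_polyfun phi.
Proof. by move=> eq_phi [Q hQ]; exists Q => z; rewrite eq_phi hQ. Qed.

Lemma is_polyfun_const c : is_polyfun (fun _ => c).
Proof. by exists c%:P => z; rewrite hornerC. Qed.

Lemma is_polyfun_id : is_polyfun id.
Proof. by exists 'X => z; rewrite hornerX. Qed.

Lemma is_polyfunD phi psi :
  is_polyfun phi -> is_polyfun psi -> is_polyfun (fun z => phi z + psi z).
Proof. by move=> [P hP] [Q hQ]; exists (P + Q) => z; rewrite hornerD hP hQ. Qed.

Lemma is_polyfunM phi psi :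
  is_polyfun phi -> is_polyfun psi -> is_polyfun (fun z => phi z * psi z).
Proof. by move=> [P hP] [Q hQ]; exists (P * Q) => z; rewrite hornerM hP hQ. Qed.

Lemma is_polyfun_sum I (r : seq I) (P : pred I) (phi : I -> F -> F) :
  (forall i, is_polyfun (phi i)) -> is_polyfun (fun z => \sum_(i <- r | P i) phi i z).
Proof.
move=> poly_phi; elim: r => [|a r IHr].
  by apply: is_polyfun_ext (is_polyfun_const 0) => z; rewrite big_nil.
have [Pa|nPa] := boolP (P a).
  by apply: is_polyfun_ext (is_polyfunD (poly_phi a) IHr) => z; rewrite big_cons Pa.
by apply: is_polyfun_ext IHr => z; rewrite big_cons (negbTE nPa).
Qed.

Lemma is_polyfun_prod I (r : seq I) (P : pred I) (phi : I -> F -> F) :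
  (forall i, is_polyfun (phi i)) -> is_polyfun (fun z => \prod_(i <- r | P i) phi i z).
Proof.
move=> poly_phi; elim: r => [|a r IHr].
  by apply: is_polyfun_ext (is_polyfun_const 1) => z; rewrite big_nil.
have [Pa|nPa] := boolP (P a).
  by apply: is_polyfun_ext (is_polyfunM (poly_phi a) IHr) => z; rewrite big_cons Pa.
by apply: is_polyfun_ext IHr => z; rewrite big_cons (negbTE nPa).
Qed.

Lemma is_polyfun_det n (M : F -> 'M[F]_n) :
  (forall i j, is_polyfun (fun z => M z i j)) -> is_polyfun (fun z => \det (M z)).
Proof.
move=> poly_M; apply: is_polyfun_sum => s.
by apply: is_polyfunM (is_polyfun_const _) _; apply: is_polyfun_prod.
Qed.

Lemma is_polyfun_peval V (x : F -> V -> F) (q : pexpr V F) :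
  (forall v, is_polyfun (x^~ v)) -> is_polyfun (fun z => peval (x z) q).
Proof.
move=> poly_x; elim: q => [c|v|q IHq r IHr|q IHq r IHr] /=.
- exact: is_polyfun_const.
- exact: poly_x.
- exact: is_polyfunD.
- exact: is_polyfunM.
Qed.

(* In characteristic 0 the roots 1, 2, 3, ... are pairwise distinct. *)
Lemma pchar0_poly_eq0 (hF : [pchar F] =i pred0) (Q : {poly F}) :
  (forall z, z != 0 -> Q.[z] = 0) -> Q = 0.
Proof.
move=> Q0; apply/eqP; apply: contraT => nzQ.
have natr_eq0 : forall n : nat, (n%:R == 0 :> F) = (n == 0%N) by apply/pcharf0P.
have natr_inj : injective (fun n : nat => n%:R : F).
  move=> a b /= eq_ab; wlog le_ab : a b eq_ab / (a <= b)%N => [hwlog|].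
    by case: (leqP a b) => [|/ltnW] le; [apply: hwlog | apply/esym/hwlog].
  have : ((b - a)%N%:R == 0 :> F) by rewrite natrB // eq_ab subrr.
  by rewrite natr_eq0 subn_eq0 => ba; apply/eqP; rewrite eqn_leq le_ab.
have := max_poly_roots nzQ (rs := [seq n.+1%:R | n <- iota 0 (size Q)]).
rewrite size_map size_iota ltnn; apply.
  by apply/allP=> _ /mapP[n _ ->]; rewrite /root Q0 // natr_eq0.
by rewrite map_inj_uniq ?iota_uniq // => a b /natr_inj [].
Qed.

End PolynomialFunctions.

Section EntrywiseDensity.
Variables (F : fieldType) (m n : nat).

Definition set_entry (y : 'M[F]_(m, n)) (kc : 'I_m * 'I_n) (z : F) : 'M[F]_(m, n) :=
  \matrix_(k, c) if (k, c) == kc then z else y k c.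

Lemma set_entry_id (y : 'M[F]_(m, n)) kc : set_entry y kc (y kc.1 kc.2) = y.
Proof. by apply/matrixP=> k c; rewrite mxE; case: eqP => // <-. Qed.

Lemma eq0_off_zero_entries (hF : [pchar F] =i pred0) (S : {set 'I_m * 'I_n})
    (Q : 'M[F]_(m, n) -> Prop) (Phi : 'M[F]_(m, n) -> F) :
  (forall y kc z, kc \in S -> Q y -> Q (set_entry y kc z)) ->
  (forall y kc, is_polyfun (fun z => Phi (set_entry y kc z))) ->
  (forall y, Q y -> (forall kc, kc \in S -> y kc.1 kc.2 != 0) -> Phi y = 0) ->
  forall y, Q y -> Phi y = 0.
Proof.
move=> QS polyPhi Phi0.
pose Z (y : 'M[F]_(m, n)) := [set kc in S | y kc.1 kc.2 == 0].
have PhiZ0 y : Q y -> Z y = set0 -> Phi y = 0.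
  move=> Qy Z0; apply: Phi0 => // kc kcS; apply/negP => y0.
  have : kc \in Z y by rewrite inE kcS y0.
  by rewrite Z0 inE.
suff: forall k y, (#|Z y| <= k)%N -> Q y -> Phi y = 0 by move=> + y; apply.
elim=> [|k IHk] y cardZ Qy; have [Z0|[kc0 kc0Z]] := set_0Vmem (Z y).
- exact: PhiZ0.
- by move: cardZ; rewrite leqn0 cards_eq0 => /eqP Z0; rewrite Z0 inE in kc0Z.
- exact: PhiZ0.
move: kc0Z; rewrite inE => /andP[kc0S /eqP y0].
have [P hP] := polyPhi y kc0.
have P0 : P = 0.
  apply: pchar0_poly_eq0 => // z nz; rewrite -hP; apply: IHk; last exact: QS.
  have sub : Z (set_entry y kc0 z) \subset Z y :\ kc0.
    apply/subsetP=> -[k' c]; rewrite !inE mxE /=.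
    by case: ifP => [_ /andP[_ z0]|_ /andP[-> ->]]; rewrite ?z0 in nz *.
  have := subset_leq_card sub; have := cardsD1 kc0 (Z y).
  by rewrite inE kc0S y0 eqxx => cardD; lia.
by rewrite -(set_entry_id y kc0) y0 hP P0 horner0.
Qed.

End EntrywiseDensity.

(** * The Schubert cell *)

Section BorelOrbit.
Variables (F : fieldType) (d N : nat).

Lemma schubert_borel (w : seq nat) (V : 'M[F]_(d, N)) :
  borel_orbit (schubert_pt F d N w) V -> schubert w V.
Proof. by move=> BV; split=> [|Z _]; [case: BV|apply=> //; case: BV]. Qed.

Lemma borel_orbit_diag (S A V : 'M[F]_(d, N)) (t : 'rV[F]_N) :
  borel_orbit S A -> (forall i, t 0 i != 0) -> gr_pt V -> same_pt V (A *m diag_mx t) ->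
  borel_orbit S V.
Proof.
move=> [_ [b [ub [ib sA]]]] tnz gV sV; split=> //.
exists (diag_mx t *m b); split; first by move=> i j ji; rewrite mul_diag_mx mxE ub ?mulr0.
split; first by rewrite unitmx_mul ib unitmx_diag andbT; apply/forallP.
apply: (same_pt_trans sV); rewrite trmx_mul tr_diag_mx mulmxA.
exact: same_pt_mulmxr.
Qed.

End BorelOrbit.

Section SchubertCell.
Variables (F : fieldType) (d N : nat) (w : seq nat).
Hypothesis hw : in_IdN d N w.

Lemma size_w : size w = d. Proof. by case: hw. Qed.

Lemma w_range k : (k < d)%N -> (0 < nth 0%N w k <= N)%N.
Proof. by case: hw => sw [_ /all_nthP]; rewrite sw; apply. Qed.

Lemma w_ltn i j : (i < j)%N -> (j < d)%N -> (nth 0%N w i < nth 0%N w j)%N.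
Proof.
move=> ij jd; case: hw => sw [sorted_w _].
by apply: (sorted_ltn_nth ltn_trans 0%N sorted_w); rewrite // inE sw // (ltn_trans ij jd).
Qed.

Lemma w_leq i j : (i <= j)%N -> (j < d)%N -> (nth 0%N w i <= nth 0%N w j)%N.
Proof. by rewrite leq_eqVlt => /orP[/eqP -> //|ij] jd; apply/ltnW/w_ltn. Qed.

Lemma pivot_subproof (k : 'I_d) : ((nth 0%N w k).-1 < N)%N.
Proof. by have /andP[w0 wN] := w_range (ltn_ord k); rewrite prednK. Qed.

(* Row k of the Schubert point is e_{l_k}; its 0-indexed pivot column is l_k - 1. *)
Definition pivot (k : 'I_d) : 'I_N := Ordinal (pivot_subproof k).

Lemma pivotS k : (pivot k).+1 = nth 0%N w k.
Proof. by have /andP[w0 _] := w_range (ltn_ord k); rewrite /= prednK. Qed.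

Lemma pivot_ltn (i j : 'I_d) : (i < j)%N -> (pivot i < pivot j)%N.
Proof. by move=> ij; rewrite -ltnS -ltnS !pivotS ltnS; apply: w_ltn. Qed.

Lemma pivot_leq (i j : 'I_d) : (i <= j)%N -> (pivot i <= pivot j)%N.
Proof. by move=> ij; rewrite -ltnS -ltnS !pivotS ltnS; apply: w_leq. Qed.

Lemma pivot_inj : injective pivot.
Proof.
move=> i j eq_ij; apply: val_inj; apply/eqP; rewrite eqn_leq.
by apply/andP; split; rewrite leqNgt; apply/negP => /pivot_ltn; rewrite eq_ij ltnn.
Qed.

Definition is_pivot (c : 'I_N) := [exists k, pivot k == c].

Lemma is_pivot_pivot k : is_pivot (pivot k).
Proof. by apply/existsP; exists k. Qed.

Definition pivots : {ffun 'I_d -> 'I_N} := [ffun k => pivot k].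

Definition cell_mx (x : 'M[F]_(d, N)) : 'M[F]_(d, N) :=
  \matrix_(k, c) if is_pivot c then (c == pivot k)%:R else x k c.

Lemma colsub_cell_mx x : colsub pivots (cell_mx x) = 1%:M.
Proof. by apply/matrixP=> k m; rewrite !mxE ffunE is_pivot_pivot (inj_eq pivot_inj) eq_sym. Qed.

Lemma pluecker_cell_pivots x : pluecker (cell_mx x) pivots = 1.
Proof. by rewrite /pluecker colsub_cell_mx det1. Qed.

Lemma cell_mx_gr_pt x : gr_pt (cell_mx x).
Proof. by apply: (row_free_pluecker (f := pivots)); rewrite pluecker_cell_pivots oner_neq0. Qed.

Lemma pluecker_cell_fupd x k c : ~~ is_pivot c -> pluecker (cell_mx x) (fupd pivots k c) = x k c.
Proof. by move=> npc; rewrite pluecker_fupd_id ?colsub_cell_mx // mxE (negbTE npc). Qed.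

Definition echelon (x : 'M[F]_(d, N)) := forall k (c : 'I_N), (pivot k < c)%N -> x k c = 0.

Lemma schubert_pt_mulmx_tr (b : 'M[F]_N) k c :
  (schubert_pt F d N w *m b^T) k c = b c (pivot k).
Proof.
rewrite mxE (bigD1 (pivot k)) //= big1 ?addr0; first by rewrite !mxE pivotS eqxx mul1r.
move=> j nj; rewrite !mxE -pivotS eqSS.
by case: eqP => [/val_inj e|]; [rewrite e eqxx in nj|rewrite mul0r].
Qed.

Lemma upper_tri_trig_tr (b : 'M[F]_N) : upper_tri b -> is_trig_mx b^T.
Proof. by move=> ub; apply/forallP=> i; apply/forallP=> j; apply/implyP=> ij; rewrite mxE ub. Qed.

Lemma echelon_borel (b : 'M[F]_N) : upper_tri b -> echelon (schubert_pt F d N w *m b^T).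
Proof. by move=> ub k c kc; rewrite schubert_pt_mulmx_tr ub. Qed.

Lemma pluecker_borel_pivots (b : 'M[F]_N) : upper_tri b -> b \in unitmx ->
  pluecker (schubert_pt F d N w *m b^T) pivots != 0.
Proof.
move=> ub ib; apply: det_trig_neq0 => [|i].
  apply/forallP=> i; apply/forallP=> j; apply/implyP=> ij.
  by rewrite mxE ffunE schubert_pt_mulmx_tr ub ?pivot_ltn.
rewrite mxE ffunE schubert_pt_mulmx_tr.
have := trig_unitmx_diag (upper_tri_trig_tr ub); rewrite unitmx_tr.
by move/(_ ib (pivot i)); rewrite mxE.
Qed.

Lemma borel_cell_mx x : echelon x -> borel_orbit (schubert_pt F d N w) (cell_mx x).
Proof.
move=> ex; split; first exact: cell_mx_gr_pt.
(* Column pivot k of b is row k of cell_mx x; the other columns are those of 1. *)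
pose b : 'M[F]_N := \matrix_(r, c)
  if [pick k | pivot k == c] is Some k then cell_mx x k r else (r == c)%:R.
have bE : schubert_pt F d N w *m b^T = cell_mx x.
  apply/matrixP=> k c; rewrite schubert_pt_mulmx_tr mxE.
  by case: pickP => [k' /eqP/pivot_inj -> //|/(_ k)]; rewrite eqxx.
have ub : upper_tri b.
  move=> i j ji; have /negbTE ij : i != j by rewrite -val_eqE /= gtn_eqF.
  rewrite mxE; case: pickP => [k /eqP e|_]; last by rewrite ij.
  by rewrite mxE; case: ifP => _; [rewrite e ij|rewrite ex // e].
exists b; split=> //; split; last by rewrite bE; apply: same_pt_refl.
rewrite -unitmx_tr unitmxE unitfE det_trig_neq0 ?upper_tri_trig_tr // => i.
rewrite !mxE; case: pickP => [k /eqP e|_]; last by rewrite eqxx oner_neq0.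
by rewrite mxE -e is_pivot_pivot eqxx oner_neq0.
Qed.

(* p_f vanishes on the Borel orbit as soon as, for some k, fewer than k + 1
   columns of f lie left of l_k: rows 0..k are supported there. *)
Definition vanishing_index (f : {ffun 'I_d -> 'I_N}) :=
  exists k : 'I_d, (#|[set m | (f m < nth 0%N w k)%N]| <= k)%N.

Lemma pluecker_echelon (G : 'M[F]_(d, N)) f :
  echelon G -> vanishing_index f -> pluecker G f = 0.
Proof.
move=> eG [k cardk]; apply: (det0_rows_supp cardk) => r rk m; rewrite inE -leqNgt => km.
rewrite mxE eG // -ltnS pivotS; exact: leq_trans (w_leq rk (ltn_ord k)) km.
Qed.

Lemma vanishing_index_sub (f : {ffun 'I_d -> 'I_N}) (k : 'I_d) (S : {set 'I_d}) :
  (forall m, (f m < nth 0%N w k)%N -> m \in S) -> (#|S| <= k)%N -> vanishing_index f.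
Proof.
move=> fS cardS; exists k; apply: leq_trans cardS; apply: subset_leq_card.
by apply/subsetP=> m; rewrite inE; apply: fS.
Qed.

Lemma borel_orbit_factor (V B : 'M[F]_(d, N)) :
  borel_orbit (schubert_pt F d N w) V -> same_pt B V ->
  exists b M, [/\ upper_tri b, b \in unitmx & B = M *m (schubert_pt F d N w *m b^T)].
Proof.
move=> [_ [b [ub [ib sV]]]] sB.
exists b, (B *m pinvmx (schubert_pt F d N w *m b^T)); split=> //.
exact/same_pt_factor/(same_pt_trans sB).
Qed.

Lemma schubert_pluecker_vanishing (V B : 'M[F]_(d, N)) f : schubert w V -> gr_pt B -> same_pt B V ->
  vanishing_index f -> pluecker B f = 0.
Proof.
move=> [gV closV] gB sB vf.
pose S (q : pexpr {ffun 'I_d -> 'I_N} F) := exists f, vanishing_index f /\ q = PVar F f.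
have : vanish S V.
  apply: closV; first by exists S.
  move=> A gA BA q [g [vg ->]] C _ sC /=.
  have [b [M [ub _ ->]]] := borel_orbit_factor BA sC.
  by rewrite pluecker_mulmx (pluecker_echelon (echelon_borel ub) vg) mulr0.
by move=> vanV; apply: (vanV (PVar F f)) => //; exists f.
Qed.

Lemma borel_pluecker_pivots (V B : 'M[F]_(d, N)) :
  borel_orbit (schubert_pt F d N w) V -> gr_pt B -> same_pt B V -> pluecker B pivots != 0.
Proof.
move=> BV gB sB; have [b [M [ub ib eB]]] := borel_orbit_factor BV sB.
rewrite eB pluecker_mulmx mulf_neq0 ?pluecker_borel_pivots // -unitfE -unitmxE.
by apply: (unitmx_row_free_mull (A := schubert_pt F d N w *m b^T)); rewrite -eB.
Qed.

Lemma normal_form (B : 'M[F]_(d, N)) : pluecker B pivots != 0 ->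
  let Y := invmx (colsub pivots B) *m B in
  [/\ B = colsub pivots B *m Y, cell_mx Y = Y &
      forall k c, Y k c * pluecker B pivots = pluecker B (fupd pivots k c)].
Proof.
move=> nzB Y; have uB : colsub pivots B \in unitmx by rewrite unitmxE unitfE.
split; [by rewrite mulKVmx| |by move=> k c; rewrite pluecker_cramer].
have Y1 : colsub pivots Y = 1%:M by rewrite -mulmx_colsub mulVmx.
apply/matrixP=> k c; rewrite mxE; case: ifP => // /existsP[m /eqP <-].
have -> : Y k (pivot m) = colsub pivots Y k m by rewrite [RHS]mxE ffunE.
by rewrite Y1 !mxE (inj_eq pivot_inj) eq_sym.
Qed.

Lemma is_polyfun_pluecker_cell (y : 'M[F]_(d, N)) kc (f : {ffun 'I_d -> 'I_N}) :
  is_polyfun (fun z => pluecker (cell_mx (set_entry y kc z)) f).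
Proof.
apply: is_polyfun_det => i j.
apply: (is_polyfun_ext (psi := fun z => if is_pivot (f j) then (f j == pivot i)%:R
                                  else if (i, f j) == kc then z else y i (f j))).
  by move=> z; rewrite !mxE.
case: (is_pivot (f j)); first exact: is_polyfun_const.
by case: ((i, f j) == kc); [apply: is_polyfun_id|apply: is_polyfun_const].
Qed.

End SchubertCell.

(** * Reduced words are spherical *)

Section SphericalCase.
Variables (F : fieldType) (d N : nat) (w : seq nat) (p : nat).
Hypothesis hw : in_IdN d N w.
Hypothesis ltpd : (p < d)%N.
Hypothesis w_low : forall k, (k < p)%N -> nth 0%N w k = k.+1.
Hypothesis w_mid : forall k, (p <= k)%N -> (k.+1 < d)%N -> nth 0%N w k = k.+2.
Hypothesis w_last : (d < nth 0%N w d.-1)%N.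

Local Notation L := (nth 0%N w d.-1).
Local Notation pivot := (pivot hw).
Local Notation is_pivot := (is_pivot hw).
Local Notation pivots := (pivots hw).
Local Notation cell_mx := (cell_mx hw).

Lemma row_last_subproof : (d.-1 < d)%N. Proof. by rewrite ltn_predL; lia. Qed.

Lemma col_p_subproof : (p < N)%N.
Proof. by have /andP[_ LN] := w_range hw row_last_subproof; lia. Qed.

Definition row_last : 'I_d := Ordinal row_last_subproof.
Definition col_p : 'I_N := Ordinal col_p_subproof.

Lemma pivotE (k : 'I_d) :
  (pivot k : nat) = if (k < p)%N then k : nat else if (k.+1 < d)%N then k.+1 else L.-1.
Proof.
rewrite /=; case: ifP => [kp|/negbT]; first by rewrite w_low.
rewrite -leqNgt => pk; case: ifP => [kd|/negbT kd]; first by rewrite w_mid.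
by have -> : k = d.-1 :> nat by have := ltn_ord k; lia.
Qed.

Lemma pivot_ge (k : 'I_d) : (k <= pivot k)%N.
Proof. by rewrite pivotE; have := ltn_ord k; case: ifP => h1; [|case: ifP => h2]; lia. Qed.

Lemma is_pivotE (c : 'I_N) : is_pivot c = [|| (c < p)%N, (p < c < d)%N | c == L.-1 :> nat].
Proof.
apply/existsP/idP => [[k /eqP <-]|].
  by rewrite pivotE; have := ltn_ord k; case: ifP => h1; [|case: ifP => h2]; lia.
have pivot_of k : (pivot k : nat) = c -> exists k, pivot k == c by exists k; apply/eqP/val_inj.
case/or3P=> cP; [|have ltc1d : (c.-1 < d)%N by lia | have ltc1d := row_last_subproof].
- by apply: (pivot_of (Ordinal (ltn_trans cP ltpd))); rewrite pivotE /= cP.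
- by apply: (pivot_of (Ordinal ltc1d)); rewrite pivotE /=; case: ifP => h1; [|case: ifP => h2]; lia.
- by apply: (pivot_of (Ordinal ltc1d)); rewrite pivotE /=; case: ifP => h1; [|case: ifP => h2]; lia.
Qed.

(* Besides the pivots, the normal form of a point of X(w) can only have
   nonzero entries in column p below row p and in the last row between
   the columns d and L - 2. *)
Definition free_pos (k : 'I_d) (c : 'I_N) : bool :=
  (p <= k)%N && ((c == p :> nat) || ((k == d.-1 :> nat) && (d <= c < L.-1)%N)).

Lemma free_pos_not_pivot k c : free_pos k c -> ~~ is_pivot c.
Proof. by rewrite is_pivotE /free_pos; lia. Qed.

Lemma free_pos_ltn_pivot k c : free_pos k c -> (c < pivot k)%N.
Proof.
by rewrite /free_pos pivotE; have := ltn_ord k; case: ifP => h1; [|case: ifP => h2]; lia.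
Qed.

Lemma vanishing_index_nonfree k c :
  ~~ is_pivot c -> ~~ free_pos k c -> vanishing_index w (fupd pivots k c).
Proof.
rewrite is_pivotE /free_pos => npc nfc; have ltkd := ltn_ord k.
pose below j := [set m : 'I_d | (m < j)%N].
case: (ltnP k p) => [ltkp|lepk]; last case: (ltnP k.+1 d) => [ltk1d|lekd].
- have ltp1d : (p.-1 < d)%N by lia.
  apply: (vanishing_index_sub (k := Ordinal ltp1d) (S := below p :\ k)).
    move=> m; rewrite /= w_low ?ffunE ?inE; last by lia.
    by case: eqP => [->|/eqP mk]; have := pivot_ge m; lia.
  by rewrite card_ord_ltnD1 //; lia.
- have ltd2d : (d.-2 < d)%N by lia.
  apply: (vanishing_index_sub (k := Ordinal ltd2d) (S := below d.-1 :\ k)).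
    move=> m; rewrite /= w_mid ?ffunE ?inE; [|lia|lia].
    case: eqP => [->|/eqP mk]; first by lia.
    by rewrite pivotE; have := ltn_ord m; case: ifP => h1; [|case: ifP => h2]; lia.
  by rewrite card_ord_ltnD1 //=; lia.
- apply: (vanishing_index_sub (k := row_last) (S := below d.-1)).
    move=> m; rewrite /= ffunE inE; case: eqP => [-> /=|/eqP]; first by lia.
    by rewrite -val_eqE /=; have := ltn_ord m; lia.
  by rewrite card_ord_ltn //=; lia.
Qed.

Definition free_supp (y : 'M[F]_(d, N)) :=
  forall k c, ~~ is_pivot c -> ~~ free_pos k c -> y k c = 0.

Definition spherical_pt : 'M[F]_(d, N) := cell_mx (\matrix_(k, c) (free_pos k c)%:R).

(* The free positions form a forest (column p joined to the rows >= p, the last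
   row joined to its free columns), so a torus element reaches any pattern of
   nonzero free entries; these are its column coordinates. *)
Definition col_scale (y : 'M[F]_(d, N)) (c : 'I_N) : F :=
  if c == p :> nat then 1
  else if [pick k | (pivot k == c) && (p <= k)%N] is Some k then (y k col_p)^-1
  else if (d <= c < L.-1)%N then y row_last c / y row_last col_p else 1.

Section ColumnScaling.
Variable y : 'M[F]_(d, N).
Hypothesis y_free : forall k c, free_pos k c -> y k c != 0.

Lemma free_pos_col_p (k : 'I_d) : (p <= k)%N -> free_pos k col_p.
Proof. by rewrite /free_pos eqxx => ->. Qed.

Lemma col_scale_neq0 c : col_scale y c != 0.
Proof.
rewrite /col_scale; case: ifP => _; first exact: oner_neq0.
case: pickP => [k /andP[_ pk]|_]; first by rewrite invr_eq0 y_free ?free_pos_col_p.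
case: ifP => dcL; last exact: oner_neq0.
rewrite mulf_neq0 ?invr_eq0 ?y_free ?free_pos_col_p //=; last by lia.
by rewrite /free_pos /= dcL eqxx orbT; lia.
Qed.

Lemma col_scale_pivot (k : 'I_d) : (p <= k)%N -> col_scale y (pivot k) = (y k col_p)^-1.
Proof.
move=> pk; rewrite /col_scale; case: ifP => [/eqP pivot_p|_].
  by move: (is_pivot_pivot hw k); rewrite is_pivotE pivot_p; lia.
case: pickP => [k' /andP[/eqP/pivot_inj -> //]|/(_ k)]; by rewrite eqxx pk.
Qed.

Lemma col_scale_free k c : free_pos k c -> y k c = col_scale y c / col_scale y (pivot k).
Proof.
move=> kc; have /andP[pk _] := kc; rewrite col_scale_pivot // invrK /col_scale.
case: ifP => [/eqP cp|ncp]; first by rewrite mul1r; congr (y k _); apply: val_inj.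
case: pickP => [k' /andP[/eqP ck' _]|_].
  by move: (free_pos_not_pivot kc); rewrite -ck' is_pivot_pivot.
move: kc; rewrite /free_pos ncp /= => /andP[_ /andP[/eqP kd ->]].
have -> : k = row_last by apply: val_inj.
by rewrite divfK // y_free ?free_pos_col_p //=; lia.
Qed.

End ColumnScaling.

Lemma cell_mx_torus (y : 'M[F]_(d, N)) :
  (forall k c, free_pos k c -> y k c != 0) -> free_supp y ->
  cell_mx y = diag_mx (\row_k (col_scale y (pivot k))^-1) *m
                (spherical_pt *m diag_mx (\row_c col_scale y c)).
Proof.
move=> y_free y_supp; apply/matrixP=> k c; rewrite mul_diag_mx mul_mx_diag !mxE.
case: ifP => pc.
  case: eqP => [->|_]; last by rewrite mul0r mulr0.
  by rewrite mul1r mulVf ?col_scale_neq0.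
case kc: (free_pos k c); last by rewrite /= mul0r mulr0 y_supp ?kc ?pc.
by rewrite /= mul1r mulrC (col_scale_free y_free kc).
Qed.

Lemma borel_spherical_pt : borel_orbit (schubert_pt F d N w) spherical_pt.
Proof.
apply: borel_cell_mx => k c kc; rewrite mxE; case kc_free: (free_pos k c) => //.
by have := free_pos_ltn_pivot kc_free; lia.
Qed.

Lemma pluecker_spherical_free k c : free_pos k c -> pluecker spherical_pt (fupd pivots k c) = 1.
Proof. by move=> kc; rewrite pluecker_cell_fupd ?(free_pos_not_pivot kc) // mxE kc. Qed.

Lemma schubert_torus_orbit V : torus_orbit spherical_pt V -> schubert w V.
Proof.
by case=> gV [t [tnz sV]]; apply/schubert_borel/(borel_orbit_diag borel_spherical_pt tnz gV sV).
Qed.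

Lemma pluecker_spherical_diag (t : 'rV[F]_N) f :
  (forall i, t 0 i != 0) -> pluecker spherical_pt f != 0 ->
  pluecker (spherical_pt *m diag_mx t) f != 0.
Proof.
by move=> tnz nzf; rewrite pluecker_diag mulf_neq0 // prodf_seq_neq0; apply/allP=> i _; apply: tnz.
Qed.

Lemma gr_pt_spherical_diag (t : 'rV[F]_N) :
  (forall i, t 0 i != 0) -> gr_pt (spherical_pt *m diag_mx t).
Proof.
move=> tnz; apply: (row_free_pluecker (f := pivots)).
by rewrite pluecker_spherical_diag // pluecker_cell_pivots oner_neq0.
Qed.

Definition free_monomial : pexpr {ffun 'I_d -> 'I_N} F :=
  PMul (PVar F pivots) (pexpr_prod
    [seq PVar F (fupd pivots kc.1 kc.2) | kc <- enum [pred kc | free_pos kc.1 kc.2]]).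

Lemma free_monomial_neq0 (B : 'M[F]_(d, N)) : peval (pluecker B) free_monomial != 0 <->
  pluecker B pivots != 0 /\ forall k c, free_pos k c -> pluecker B (fupd pivots k c) != 0.
Proof.
rewrite /= peval_prod big_map mulf_eq0 negb_or prodf_seq_neq0.
split=> [/andP[nzB /allP nz]|[-> nz]]; first split=> // k c kc.
  by apply: (nz (k, c)); rewrite mem_enum.
by apply/allP=> -[k c]; rewrite mem_enum; apply: nz.
Qed.

Lemma free_supp_normal_form (V B : 'M[F]_(d, N)) :
  schubert w V -> gr_pt B -> same_pt B V -> pluecker B pivots != 0 ->
  free_supp (invmx (colsub pivots B) *m B).
Proof.
move=> XV gB sB nzB k c npc nfc; have [_ _ cramerB] := normal_form nzB.
have := cramerB k c.
rewrite (schubert_pluecker_vanishing hw XV gB sB (vanishing_index_nonfree npc nfc)).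
by move/eqP; rewrite mulf_eq0 (negbTE nzB) orbF => /eqP.
Qed.

Lemma torus_orbit_free_monomial (V B : 'M[F]_(d, N)) :
  schubert w V -> gr_pt B -> same_pt B V -> peval (pluecker B) free_monomial != 0 ->
  torus_orbit spherical_pt V.
Proof.
move=> XV gB sB /free_monomial_neq0[nzB nz_free].
have [eB cellY cramerB] := normal_form nzB.
set Y := invmx (colsub pivots B) *m B in eB cellY cramerB.
have Y_free k c : free_pos k c -> Y k c != 0.
  by move=> kc; have := nz_free k c kc; rewrite -cramerB mulf_eq0 negb_or => /andP[].
have Y_supp : free_supp Y := free_supp_normal_form XV gB sB nzB.
split; first by case: XV.
pose t := \row_c col_scale Y c.
have eY : Y = diag_mx (\row_k (col_scale Y (pivot k))^-1) *m (spherical_pt *m diag_mx t).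
  by rewrite -{1}cellY (cell_mx_torus Y_free Y_supp).
exists t; split; first by move=> i; rewrite mxE col_scale_neq0.
apply: (same_pt_trans (same_pt_sym sB)); rewrite eB {1}eY.
have uB : colsub pivots B \in unitmx by rewrite unitmxE unitfE.
apply: (same_pt_trans (same_pt_mulmxl _ uB)); apply: same_pt_mulmxl.
by rewrite unitmx_diag; apply/forallP=> k; rewrite mxE invr_eq0 col_scale_neq0.
Qed.

Lemma torus_orbit_open : rel_open (schubert w) (torus_orbit spherical_pt).
Proof.
exists (vanish (fun q => q = free_monomial)); split; first by exists (fun q => q = free_monomial).
move=> V gV; split=> [TV|[XV nvan]].
  split; first exact: schubert_torus_orbit.
  case: TV => _ [t [tnz sV]] van.
  have := van _ erefl _ (gr_pt_spherical_diag tnz) (same_pt_sym sV).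
  apply/eqP/free_monomial_neq0; split=> [|k c kc]; apply: pluecker_spherical_diag => //.
    by rewrite pluecker_cell_pivots oner_neq0.
  by rewrite pluecker_spherical_free ?oner_neq0.
have [B [gB sB nzB]] :
    exists B, [/\ gr_pt B, same_pt B V & peval (pluecker B) free_monomial != 0].
  apply: NNPP => noB; apply: nvan => _ -> B gB sB; apply/eqP; apply: contraT => nzB.
  by case: noB; exists B.
exact: torus_orbit_free_monomial XV gB sB nzB.
Qed.

Lemma free_supp_set_entry y kc z :
  free_pos kc.1 kc.2 -> free_supp y -> free_supp (set_entry y kc z).
Proof.
move=> kc_free y_supp k c npc nfc; rewrite mxE; case: eqP => [ekc|_]; last exact: y_supp.
by move: kc_free; rewrite -ekc (negbTE nfc).
Qed.

Lemma torus_orbit_cell (y : 'M[F]_(d, N)) (a : F) :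
  a != 0 -> (forall k c, free_pos k c -> y k c != 0) -> free_supp y ->
  torus_orbit spherical_pt (diag_mx (\row_i if i == row_last then a else 1) *m cell_mx y).
Proof.
move=> nza y_free y_supp.
have uD : diag_mx (\row_i if i == row_last then a else 1) \in unitmx.
  by rewrite unitmxE det_diag_delta unitfE.
split.
  apply: (row_free_pluecker (f := pivots)).
  by rewrite pluecker_mulmx det_diag_delta pluecker_cell_pivots mulr1.
exists (\row_c col_scale y c); split; first by move=> i; rewrite mxE col_scale_neq0.
rewrite (cell_mx_torus y_free y_supp) mulmxA; apply: same_pt_mulmxl.
rewrite unitmx_mul uD unitmx_diag; apply/forallP=> k.
by rewrite mxE invr_eq0 col_scale_neq0.
Qed.

(* Normalising by the pivot minor, a Pluecker polynomial on the Borel orbit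
   becomes a polynomial in the free entries of the normal form. *)
Lemma torus_orbit_closure_borel (hF : [pchar F] =i pred0) (Z : 'M[F]_(d, N) -> Prop) V :
  gr_closed Z -> (forall A, gr_pt A -> torus_orbit spherical_pt A -> Z A) ->
  borel_orbit (schubert_pt F d N w) V -> Z V.
Proof.
move=> [S Z_S] Z_orbit BV; have gV : gr_pt V by case: BV.
apply/(Z_S _ gV) => q Sq B gB sB.
have nzB := borel_pluecker_pivots hw BV gB sB.
have [eB cellY _] := normal_form nzB.
set Y := invmx (colsub pivots B) *m B in eB cellY.
pose a := pluecker B pivots.
rewrite (eq_peval (x' := fun f => a * pluecker (cell_mx Y) f)) => [|f]; last first.
  by rewrite {1}eB pluecker_mulmx cellY.
apply: (eq0_off_zero_entries hF (S := [set kc | free_pos kc.1 kc.2]) (Q := free_supp)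
  (Phi := fun y => peval (fun f => a * pluecker (cell_mx y) f) q)).
- by move=> y kc z; rewrite inE; apply: free_supp_set_entry.
- move=> y kc; apply: is_polyfun_peval => f.
  exact: is_polyfunM (is_polyfun_const a) (is_polyfun_pluecker_cell _ _ _ _).
- move=> y y_supp y_free.
  have y_free' k c : free_pos k c -> y k c != 0 by move=> kc; apply: (y_free (k, c)); rewrite inE.
  have Ty := torus_orbit_cell nzB y_free' y_supp.
  have [gT _] := Ty; have := proj1 (Z_S _ gT) (Z_orbit _ gT Ty) q Sq _ gT (same_pt_refl _).
  by rewrite (eq_peval (x' := fun f => a * pluecker (cell_mx y) f)) // => f;
    rewrite pluecker_mulmx det_diag_delta.
- exact: free_supp_normal_form (schubert_borel BV) gB sB nzB.
Qed.

Lemma torus_orbit_dense (hF : [pchar F] =i pred0) :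
  rel_dense (schubert w) (torus_orbit spherical_pt).
Proof.
move=> V [gV closV]; split=> // Z closZ Z_orbit; apply: closV => // A _ BA.
exact: torus_orbit_closure_borel.
Qed.

Lemma spherical_T_spherical (hF : [pchar F] =i pred0) : T_spherical F d N w.
Proof.
exists spherical_pt; split; first exact/schubert_borel/borel_spherical_pt.
by split; [apply: torus_orbit_open|apply: torus_orbit_dense].
Qed.

End SphericalCase.

(** * Other words are not spherical *)

Lemma dense_orbit_vanish (F : fieldType) d N w (A : 'M[F]_(d, N)) q :
  rel_dense (schubert w) (torus_orbit A) ->
  (forall B (t : 'rV[F]_N), gr_pt B -> (forall i, t 0 i != 0) ->
     same_pt B (A *m diag_mx t) -> peval (pluecker B) q = 0) ->
  forall V, schubert w V -> peval (pluecker V) q = 0.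
Proof.
move=> dense q_orbit V XV; have [gV closV] := dense V XV.
suff : vanish (fun r => r = q) V by move/(_ q erefl V gV (same_pt_refl V)).
apply: closV; first by exists (fun r => r = q).
move=> B gB [_ [t [tnz sB]]] _ -> B' gB' sB'.
exact: q_orbit B' t gB' tnz (same_pt_trans sB' sB).
Qed.

Lemma two_nonpivots d N w (hw : in_IdN d N w) (i : 'I_d) : (i.+2 < nth 0%N w i)%N ->
  exists a b : 'I_N, [/\ a != b, ~~ is_pivot hw a, ~~ is_pivot hw b,
                         (a < pivot hw i)%N & (b < pivot hw i)%N].
Proof.
move=> gap_i.
pose S := [set c : 'I_N | (c < pivot hw i)%N && ~~ is_pivot hw c].
pose P := pivot hw @: [set m : 'I_d | (m < i)%N].
have sub : [set c : 'I_N | (c < pivot hw i)%N] \subset S :|: P.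
  apply/subsetP=> c; rewrite !inE => ci.
  case: (boolP (is_pivot hw c)) => [/existsP[m /eqP cm]|]; last by rewrite ci.
  apply/orP; right; apply/imsetP; exists m => //; rewrite inE ltnNge; apply/negP => im.
  by have := pivot_leq hw im; rewrite cm; lia.
have cardP : (#|P| <= i)%N.
  by apply: leq_trans (leq_imset_card _ _) _; rewrite card_ord_ltn // ltnW.
have := leq_trans (subset_leq_card sub) (leq_card_setU S P).
rewrite card_ord_ltn ?(ltnW (ltn_ord _)) // => cardSP.
have [a [b [aS bS ab]]] : exists a b, [/\ a \in S, b \in S & a != b].
  by apply/card_gt1P; have := pivotS hw i; lia.
by move: aS bS; rewrite !inE => /andP[ai na] /andP[bi nb]; exists a, b.
Qed.

Section NonSphericalCase.
Variables (F : fieldType) (d N : nat) (w : seq nat).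
Hypothesis hw : in_IdN d N w.
Variables (i j : 'I_d) (a b : 'I_N).
Hypotheses (lt_ij : (i < j)%N) (neq_ab : a != b).
Hypotheses (npa : ~~ is_pivot hw a) (npb : ~~ is_pivot hw b).
Hypotheses (lt_a : (a < pivot hw i)%N) (lt_b : (b < pivot hw i)%N).

Local Notation pivots := (pivots hw).
Local Notation cell_mx := (cell_mx hw).

Definition cross_mx (a' b' : 'I_N) : 'M[F]_(d, N) :=
  cell_mx (\matrix_(k, c) (((k == i) && (c == a'))%:R + ((k == j) && (c == b'))%:R)).

Lemma schubert_cross_mx (a' b' : 'I_N) :
  (a' < pivot hw i)%N -> (b' < pivot hw i)%N -> schubert w (cross_mx a' b').
Proof.
move=> lt_a' lt_b'; apply/schubert_borel/borel_cell_mx => k c kc; rewrite mxE.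
have /negbTE-> : ~~ ((k == i) && (c == a')).
  by apply/negP=> /andP[/eqP ki /eqP ca]; move: kc; rewrite ki ca; lia.
have /negbTE-> : ~~ ((k == j) && (c == b')); last by rewrite addr0.
apply/negP=> /andP[/eqP kj /eqP cb]; move: kc; rewrite kj cb.
by have := pivot_leq hw (ltnW lt_ij); lia.
Qed.

Definition cross_u : pexpr {ffun 'I_d -> 'I_N} F :=
  PMul (PVar F (fupd pivots i a)) (PVar F (fupd pivots j b)).
Definition cross_v : pexpr {ffun 'I_d -> 'I_N} F :=
  PMul (PVar F (fupd pivots i b)) (PVar F (fupd pivots j a)).

Lemma cross_eqs : [/\ (i == j) = false, (j == i) = false, (a == b) = false & (b == a) = false].
Proof.
have ij : i != j by rewrite -val_eqE /= ltn_eqF.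
by split; apply/negbTE; rewrite // eq_sym.
Qed.

Lemma cross_uv_ab :
  peval (pluecker (cross_mx a b)) cross_u = 1 /\ peval (pluecker (cross_mx a b)) cross_v = 0.
Proof.
have [ij ji ab ba] := cross_eqs.
by rewrite /= !pluecker_cell_fupd // !mxE !eqxx ij ji ab ba /= !addr0 !add0r mulr1 mulr0.
Qed.

Lemma cross_uv_ba :
  peval (pluecker (cross_mx b a)) cross_u = 0 /\ peval (pluecker (cross_mx b a)) cross_v = 1.
Proof.
have [ij ji ab ba] := cross_eqs.
by rewrite /= !pluecker_cell_fupd // !mxE !eqxx ij ji ab ba /= !addr0 !add0r mulr1 mulr0.
Qed.

Lemma prod_fupd (t : 'rV[F]_N) k c :
  \prod_m t 0 (fupd pivots k c m) = t 0 c * \prod_(m | m != k) t 0 (pivots m).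
Proof.
rewrite (bigD1 k) //= ffunE eqxx; congr (_ * _).
by apply: eq_bigr => m /negbTE mk; rewrite ffunE mk.
Qed.

Lemma torus_cross_uv (A B : 'M[F]_(d, N)) (t : 'rV[F]_N) : same_pt B (A *m diag_mx t) ->
  exists K, peval (pluecker B) cross_u = K * peval (pluecker A) cross_u /\
            peval (pluecker B) cross_v = K * peval (pluecker A) cross_v.
Proof.
move=> /same_pt_factor ->; set M := _ *m pinvmx _.
exists (\det M ^+ 2 * (t 0 a * t 0 b * (\prod_(m | m != i) t 0 (pivots m)) *
                                      (\prod_(m | m != j) t 0 (pivots m)))).
by rewrite /= !pluecker_mulmx !pluecker_diag !prod_fupd; split; ring.
Qed.

Lemma not_T_spherical : ~ T_spherical F d N w.
Proof.
move=> [A [_ [_ dense]]].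
pose uA := peval (pluecker A) cross_u; pose vA := peval (pluecker A) cross_v.
have X_ab := schubert_cross_mx lt_a lt_b; have X_ba := schubert_cross_mx lt_b lt_a.
have [u_ab v_ab] := cross_uv_ab; have [u_ba v_ba] := cross_uv_ba.
pose q := PAdd (PMul (PConst _ uA) cross_v) (PMul (PConst _ (- vA)) cross_u).
have qE (B : 'M[F]_(d, N)) : peval (pluecker B) q =
    uA * peval (pluecker B) cross_v - vA * peval (pluecker B) cross_u.
  by rewrite /= mulNr.
have q0 V : schubert w V -> peval (pluecker V) q = 0.
  apply: (dense_orbit_vanish dense) => B t _ _ sB.
  have [K [eu ev]] := torus_cross_uv sB.
  by rewrite qE eu ev mulrCA [vA * _]mulrCA [vA * uA]mulrC subrr.
have vA0 : vA = 0.
  by move: (q0 _ X_ab); rewrite qE u_ab v_ab mulr0 mulr1 sub0r => /eqP; rewrite oppr_eq0 => /eqP.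
have uA0 : uA = 0 by move: (q0 _ X_ba); rewrite qE u_ba v_ba mulr0 mulr1 subr0.
have : peval (pluecker (cross_mx a b)) cross_u = 0.
  apply: (dense_orbit_vanish dense) X_ab => B t _ _ sB.
  by have [K [-> _]] := torus_cross_uv sB; rewrite -/uA uA0 mulr0.
by rewrite u_ab => /eqP; rewrite oner_eq0.
Qed.

End NonSphericalCase.

(** * The reduction *)

Section Reduction.
Variables (d N : nat) (w : seq nat).
Hypothesis hw : in_IdN d N w.
Hypothesis hne : w <> iota 1 d.

Local Notation p := (red_p w).

Lemma w_gt_index k : (k < d)%N -> (k < nth 0%N w k)%N.
Proof.
elim: k => [|k IHk] ltkd; first by have /andP[] := w_range hw ltkd.
by have := w_ltn hw (ltnSn k) ltkd; have := IHk (ltnW ltkd); lia.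
Qed.

Lemma w_gap i j : (i <= j)%N -> (j < d)%N -> (nth 0%N w i + (j - i) <= nth 0%N w j)%N.
Proof.
elim: j => [|j IHj] ij ltjd; first by move: ij; rewrite leqn0 => /eqP ->; rewrite addn0.
case: (ltnP i j.+1) => [ltij|ji]; last first.
  have -> : i = j.+1 by lia.
  by rewrite subnn addn0.
by have := IHj ltij (ltnW ltjd); have := w_ltn hw (ltnSn j) ltjd; lia.
Qed.

Lemma red_p_leq : (p <= d)%N.
Proof. by rewrite /red_p -(size_w hw) -{2}(size_iota 0 (size w)) find_size. Qed.

Lemma w_before_red_p k : (k < p)%N -> nth 0%N w k = k.+1.
Proof.
move=> ltkp; have ltkw : (k < size w)%N by rewrite (size_w hw) (leq_trans ltkp red_p_leq).
by have /negbFE/eqP := before_find 0%N ltkp; rewrite nth_iota ?add0n.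
Qed.

Lemma red_p_ltn : (p < d)%N.
Proof.
rewrite ltnNge; apply/negP => ledp; apply: hne.
apply: (@eq_from_nth _ 0%N); first by rewrite size_iota (size_w hw).
move=> k; rewrite (size_w hw) => ltkd.
by rewrite nth_iota // w_before_red_p ?add1n // (leq_trans ltkd ledp).
Qed.

Lemma w_red_p : (p.+2 <= nth 0%N w p)%N.
Proof.
have ltpw : (p < size w)%N by rewrite (size_w hw) red_p_ltn.
have hasp : has (fun i => nth 0%N w i != i.+1) (iota 0 (size w)) by rewrite has_find size_iota.
have := nth_find 0%N hasp; rewrite -/(red_p w) nth_iota // add0n.
by have := w_gt_index red_p_ltn; lia.
Qed.

(* w = (1, ..., p, p + 2, ..., d, L), i.e. wbar = (2, ..., dbar, Nbar). *)
Definition reduced_form := forall k, (p <= k)%N -> (k.+1 < d)%N -> nth 0%N w k = k.+2.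

Lemma nth_wbar m : (m < d - p)%N -> nth 0%N (wbar w) m = (nth 0%N w (p + m) - p)%N.
Proof.
by move=> ltm; rewrite /wbar (nth_map 0%N) ?nth_drop // size_drop (size_w hw).
Qed.

Lemma size_wbar : size (wbar w) = (d - p)%N.
Proof. by rewrite /wbar size_map size_drop (size_w hw). Qed.

Lemma reduced_formP : reduced_form <->
  (wbar w = [:: Nbar w] \/ ((2 <= dbar w)%N /\ wbar w = iota 2 (dbar w).-1 ++ [:: Nbar w])).
Proof.
have ltpd := red_p_ltn.
have dbarE : dbar w = (d - p)%N by rewrite /dbar (size_w hw).
have NbarE : Nbar w = (nth 0%N w d.-1 - p)%N by rewrite /Nbar -nth_last (size_w hw).
split=> [red|[wbarE|[ledbar wbarE]] k pk ltk1d]; last 2 first.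
- by have := size_wbar; rewrite wbarE /=; lia.
- have ltm : (k - p < d - p)%N by lia.
  have := nth_wbar ltm; rewrite wbarE nth_cat size_iota dbarE ifT; last by lia.
  by rewrite nth_iota ?subnKC //; lia.
have wbarE : wbar w = iota 2 (dbar w).-1 ++ [:: Nbar w].
  apply: (@eq_from_nth _ 0%N) => [|m]; first by rewrite size_wbar size_cat size_iota dbarE /=; lia.
  rewrite size_wbar => ltm; rewrite nth_wbar // nth_cat size_iota dbarE.
  case: ifP => ltm1; first by rewrite nth_iota // red; lia.
  by rewrite (_ : m - _ = 0)%N /= ?NbarE; [congr (nth _ _ _ - _)%N|]; lia.
case: (ltnP 1 (dbar w)) => ledbar; [by right|left].
by rewrite wbarE (_ : (dbar w).-1 = 0)%N //; lia.
Qed.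

Lemma reduced_form_last : reduced_form -> (d < nth 0%N w d.-1)%N.
Proof.
move=> red; have ltpd := red_p_ltn; have := w_red_p.
case: (ltnP p.+1 d) => [lt_p1d|le_dp1]; last by rewrite (_ : d.-1 = p); lia.
have lt_d21 : (d.-2 < d.-1)%N by lia.
have lt_d1 : (d.-1 < d)%N by lia.
by have := w_ltn hw lt_d21 lt_d1; rewrite (red d.-2); lia.
Qed.

Lemma not_reduced_form_gap : ~ reduced_form ->
  exists i j : 'I_d, (i < j)%N /\ (i.+2 < nth 0%N w i)%N.
Proof.
move=> nred.
have [k [pk ltk1d nwk]] : exists k, [/\ (p <= k)%N, (k.+1 < d)%N & nth 0%N w k <> k.+2].
  by apply: NNPP => none; apply: nred => k pk ltk1d; apply: NNPP => nwk; apply: none; exists k.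
have le_kd2 : (k <= d.-2)%N by lia.
have lt_d2 : (d.-2 < d)%N by lia.
have lt_d1 : (d.-1 < d)%N by lia.
exists (Ordinal lt_d2), (Ordinal lt_d1) => /=; split; first by lia.
by have := w_gap pk (ltnW ltk1d); have := w_gap le_kd2 lt_d2; have := w_red_p; lia.
Qed.

End Reduction.

Theorem proposition6p1 (F : closedFieldType) (hF : [pchar F]%R =i pred0)
  (d N : nat) (w : seq nat) (hd : (1 <= d)%N) (hdN : (d < N)%N)
  (hw : in_IdN d N w) (hne : w <> iota 1 d) :
  T_spherical F d N w <->
  (wbar w = [:: Nbar w] \/
   ((2 <= dbar w)%N /\ wbar w = iota 2 (dbar w).-1 ++ [:: Nbar w])).
Proof.
rewrite -(reduced_formP hw hne); split=> [sph|red]; last first.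
  exact: spherical_T_spherical hw (red_p_ltn hw hne) (w_before_red_p hw) red
           (reduced_form_last hw hne red) hF.
apply: NNPP => nred; have [i [j [lt_ij gap]]] := not_reduced_form_gap hw hne nred.
have [a [b [neq_ab npa npb lt_a lt_b]]] := two_nonpivots hw gap.
exact: not_T_spherical lt_ij neq_ab npa npb lt_a lt_b sph.
Qed.
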